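(* Let $\tau=\tau_1\ldots\tau_k\in\mathcal{S}_k$ and $0\le j\le k\le n$. The number of involutions $\pi\in\mathcal{S}_n$ that contain $\tau$ as a subsequence and that map exactly $j$ elements of $[k]$ into $[k]$ equals $\binom{n-k}{k-j}t_{n-2k+j}$ if either $j=0$ or the pattern of $\tau_1\ldots\tau_j$ is an involution in $\mathcal{S}_j$, and equals $0$ otherwise.
   Context: $[k]=\{1,\ldots,k\}$. $t_m$ denotes the number of involutions in $\mathcal{S}_m$ ($t_0=1$); when $k-j>n-k$ the binomial coefficient is $0$ and the term is $0$. A permutation $\pi=\pi_1\ldots\pi_n$ contains $\tau$ as a subsequence if there are indices $i_1<\cdots<i_k$ with $\pi_{i_r}=\tau_r$ for all $r$. The pattern of a word of $j$ distinct letters is the word obtained by the order-preserving relabeling of its letters by $[j]$. *)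

From mathcomp Require Import all_boot all_order all_fingroup.
Set Implicit Arguments. Unset Strict Implicit. Unset Printing Implicit Defensive.

(* Permutations of [n] are modelled by 'S_n = {perm 'I_n}, with values
   shifted to {0,...,n-1}.  The one-line word of s : 'S_n is
   s(0) s(1) ... s(n-1) (as a sequence of nats). *)
Definition perm_word (n : nat) (s : 'S_n) : seq nat :=
  [seq val (s i) | i <- enum 'I_n].

Definition is_involution (n : nat) (s : 'S_n) : bool := (s * s == 1)%g.

Definition t (m : nat) : nat := #|[set s : 'S_m | is_involution s]|.

Definition contains_subseq (n k : nat) (pi : 'S_n) (tau : 'S_k) : bool :=
  subseq (perm_word tau) (perm_word pi).

Definition nb_into (n k : nat) (pi : 'S_n) : nat :=
  #|[set i : 'I_n | (val i < k) && (val (pi i) < k)]|.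

(* pattern of a word of distinct letters: order-preserving relabelling
   by {0,...,size w - 1} (0-indexed version of [j]) *)
Definition pattern (w : seq nat) : seq nat :=
  [seq count (fun y => y < x) w | x <- w].

Definition word_involution (p : seq nat) : bool :=
  all (fun i => nth 0 p (nth 0 p i) == i) (iota 0 (size p)).

From mathcomp Require Import all_boot all_order all_fingroup.
From mathcomp Require Import zify.
Set Implicit Arguments. Unset Strict Implicit. Unset Printing Implicit Defensive.

(* An involution p contains tau iff, writing p^-1[k] = Q = {q_1 < ... < q_k},
   it maps q_i to tau_i, hence also tau_i to q_i.  Fix Q with |[k] :&: Q| = j:
   these prescribed swaps determine p on [k] :|: Q, a set of size 2k - j, and
   they are consistent exactly when [k] :&: Q = {tau_1, ..., tau_j} and the
   swaps q_i <-> tau_i (i <= j) inside [k] form an involution, i.e. when the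
   pattern of tau_1 ... tau_j is an involution.  The other n + j - 2k points
   carry an arbitrary involution, and Q is determined by its k - j elements
   outside [k]. *)

Lemma perm_involP (T : finType) (s : {perm T}) :
  reflect (involutive s) (s * s == 1)%g.
Proof.
apply: (iffP eqP) => [ss x | sK]; first by rewrite -permM ss perm1.
by apply/permP => x; rewrite permM sK perm1.
Qed.

Section InvolutionsMapping.
Variables (T : finType) (a b : seq T).
Hypotheses (a_uniq : uniq a) (b_uniq : uniq b) (size_ab : size a = size b).

(* The only candidate for the restriction to [a ++ b] of an involution
   mapping a_i to b_i: it swaps a_i and b_i. *)
Definition matching (x : T) : T :=
  if x \in a then nth x b (index x a)
  else if x \in b then nth x a (index x b) else x.

Definition matched : {set T} := [set x | (x \in a) || (x \in b)].

Definition compatible : bool := [forall x, matching (matching x) == x].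

Lemma compatibleP : reflect (involutive matching) compatible.
Proof. by apply: (iffP forallP) => mK x; apply/eqP. Qed.

Lemma matching_out x : x \notin matched -> matching x = x.
Proof. by rewrite /matching inE negb_or => /andP[/negbTE -> /negbTE ->]. Qed.

Lemma matched_matching x : (matching x \in matched) = (x \in matched).
Proof.
rewrite /matching !inE; case xa: (x \in a).
  by rewrite mem_nth ?orbT // -size_ab index_mem.
by case xb: (x \in b); rewrite ?mem_nth ?size_ab ?index_mem ?xa ?xb.
Qed.

Lemma matching_nth d i : i < size a -> matching (nth d a i) = nth d b i.
Proof.
move=> ia; rewrite /matching mem_nth // index_uniq //.
by apply: set_nth_default; rewrite -size_ab.
Qed.

Lemma involution_on_matched (p : {perm T}) :
  involutive p -> map p a = b -> {in matched, p =1 matching}.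
Proof.
move=> pK pab x; rewrite inE /matching; case: ifP => [xa _ | _ /= xb].
  by rewrite -pab (nth_map x) ?index_mem // nth_index.
have ib : index x b < size a by rewrite size_ab index_mem.
have e : p (nth x a (index x b)) = x by rewrite -(nth_map x x) // pab nth_index.
by rewrite xb -{1}e pK.
Qed.

Lemma compatible_involution (p : {perm T}) :
  involutive p -> map p a = b -> compatible.
Proof.
move=> pK pab; apply/compatibleP => x.
have [xD | xD] := boolP (x \in matched); last by rewrite !matching_out ?matched_matching.
have mxD : matching x \in matched by rewrite matched_matching.
by rewrite -(involution_on_matched pK pab mxD) -(involution_on_matched pK pab xD).
Qed.

Lemma compatible_nthP d :
  reflect (forall i i', i < size a -> i' < size a ->
             nth d a i' = nth d b i -> nth d b i' = nth d a i)
          compatible.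
Proof.
apply: (iffP compatibleP) => [mK i i' ia ia' e | H x].
  by rewrite -(matching_nth d ia') e -(matching_nth d ia) mK.
have [xa | xa] := boolP (x \in a).
  have ia : index x a < size a by rewrite index_mem.
  rewrite -[in matching x](nth_index d xa) matching_nth //.
  have [ya | ya] := boolP (nth d b (index x a) \in a).
    rewrite -(nth_index d ya) matching_nth ?index_mem //.
    by rewrite (H _ _ ia) ?index_mem ?nth_index.
  have yb : nth d b (index x a) \in b by rewrite mem_nth // -size_ab.
  by rewrite /matching (negbTE ya) yb index_uniq -?size_ab // (set_nth_default d) ?nth_index.
have [xb | xb] := boolP (x \in b); last by rewrite !matching_out // inE negb_or xa.
have ib : index x b < size a by rewrite size_ab index_mem.
have -> : matching x = nth d a (index x b).
  by rewrite /matching (negbTE xa) xb (set_nth_default d).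
by rewrite matching_nth // nth_index.
Qed.

(* [matching] becomes a permutation when compatible; composing with it is a
   bijection onto the involutions fixing [matched] pointwise. *)
Lemma card_involutions_mapping :
  #|[set p : {perm T} | (p * p == 1)%g && (map p a == b)]| =
  if compatible then #|[set s : {perm T} | (s * s == 1)%g && perm_on (~: matched) s]|
  else 0.
Proof.
case: ifP => [/compatibleP mK | incompat]; last first.
  apply: eq_card0 => p; rewrite inE; apply/negP => /andP[/perm_involP pK /eqP pab].
  by rewrite (compatible_involution pK pab) in incompat.
pose m := perm (inv_inj mK).
have mE x : m x = matching x by rewrite permE.
have mm : (m * m = 1)%g by apply/permP => x; rewrite permM perm1 !mE mK.
have mab : map m a = b.
  case E: a => [|d a']; first by apply/esym/size0nil; rewrite -size_ab E.
  rewrite -E; apply: (@eq_from_nth _ d); rewrite ?size_map // => i ia.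
  by rewrite (nth_map d) // mE matching_nth.
rewrite -[in RHS](card_imset _ (mulIg m)); apply: eq_card => p; rewrite inE.
apply/idP/imsetP => [/andP[/perm_involP pK /eqP pab] | [s]].
  have pm := involution_on_matched pK pab.
  have pD x : x \notin matched -> p x \notin matched.
    by apply: contra => pxD; rewrite -[x]pK pm // matched_matching.
  have sE x : (p * m)%g x = if x \in matched then x else p x.
    rewrite permM mE; case: ifP => xD; first by rewrite pm ?mK.
    by rewrite matching_out // pD ?xD.
  exists (p * m)%g; last by rewrite -mulgA mm mulg1.
  rewrite inE; apply/andP; split.
    apply/perm_involP => x; have [xD | xD] := boolP (x \in matched).
      by rewrite (sE x) xD (sE x) xD.
    by rewrite (sE x) (negbTE xD) sE (negbTE (pD _ xD)) pK.
  by apply/subsetP => x; rewrite inE sE in_setC; case: ifP => // _; rewrite eqxx.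
rewrite inE => /andP[/perm_involP sK s_on] ->.
have sD x : x \in matched -> s x = x by move=> xD; rewrite (out_perm s_on) // inE xD.
have sD' x : x \notin matched -> s x \notin matched.
  by move=> xD; rewrite -in_setC perm_closed // in_setC.
have pE x : (s * m)%g x = if x \in matched then matching x else s x.
  rewrite permM mE; case: ifP => xD; first by rewrite sD.
  by rewrite matching_out // sD' ?xD.
apply/andP; split.
  apply/perm_involP => x; have [xD | xD] := boolP (x \in matched).
    by rewrite (pE x) xD pE matched_matching xD mK.
  by rewrite (pE x) (negbTE xD) pE (negbTE (sD' _ xD)) sK.
by rewrite -mab; apply/eqP/eq_in_map => x xa; rewrite pE mE inE xa.
Qed.
End InvolutionsMapping.

Section InvolutionsOn.
Variables (T : finType) (R : {set T}).
Local Notation U := {x : T | x \in R}.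
Local Notation m := #|{: U}|.

Definition extend_fun (s : 'S_m) (x : T) : T :=
  if insub x is Some u then val (enum_val (s (enum_rank (u : U)))) else x.

Lemma extend_funK s : cancel (extend_fun s) (extend_fun s^-1).
Proof.
move=> x; rewrite /extend_fun; have [xR | xR] := boolP (x \in R); last by rewrite !insubN.
by rewrite (insubT (mem R) xR) valK /= enum_valK permK enum_rankK.
Qed.

Definition extend_perm (s : 'S_m) : {perm T} := perm (can_inj (extend_funK s)).

Lemma extend_perm_val s (i : 'I_m) :
  extend_perm s (val (enum_val i)) = val (enum_val (s i)).
Proof. by rewrite permE /extend_fun valK enum_valK. Qed.

Lemma extend_perm_inj : injective extend_perm.
Proof.
move=> s1 s2 E; apply/permP => i; apply/enum_val_inj/val_inj.
by rewrite -!extend_perm_val E.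
Qed.

Lemma extend_perm_on s : perm_on R (extend_perm s).
Proof.
apply/subsetP => x; rewrite inE permE /extend_fun.
by case: insubP => [// | _]; rewrite eqxx.
Qed.

Lemma extend_perm_involution s :
  (extend_perm s * extend_perm s == 1)%g = (s * s == 1)%g.
Proof.
apply/perm_involP/perm_involP => sK i.
  by apply/enum_val_inj/val_inj; rewrite -!extend_perm_val sK.
have [xR | xR] := boolP (i \in R); last by rewrite !(out_perm (extend_perm_on s)).
by rewrite -[i]/(val (Sub i xR : U)) -[Sub i xR]enum_rankK !extend_perm_val sK.
Qed.

Lemma extend_perm_onto p : perm_on R p -> {s | p = extend_perm s}.
Proof.
move=> p_on; have pR x : (p x \in R) = (x \in R) by rewrite perm_closed.
pose g (i : 'I_m) : 'I_m := enum_rank (insubd (enum_val i) (p (val (enum_val i))) : U).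
have gE i : val (enum_val (g i)) = p (val (enum_val i)).
  by rewrite enum_rankK insubdK // pR (valP (enum_val i)).
have g_inj : injective g.
  by move=> i1 i2 /(congr1 (val \o enum_val)) /=; rewrite !gE => /perm_inj /val_inj /enum_val_inj.
exists (perm g_inj); apply/permP => x.
have [xR | xR] := boolP (x \in R); last by rewrite !(out_perm _ xR) ?extend_perm_on.
by rewrite -[x]/(val (Sub x xR : U)) -[Sub x xR]enum_rankK extend_perm_val permE gE.
Qed.

Lemma card_involutions_on :
  #|[set s : {perm T} | (s * s == 1)%g && perm_on R s]| = t #|R|.
Proof.
rewrite /t -[#|R|](card_sig (mem R)) -(card_imset _ extend_perm_inj).
apply: eq_card => p; rewrite !inE; apply/andP/imsetP => [[pK /extend_perm_onto [s ps]] | [s]].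
  by exists s; rewrite // inE /is_involution -extend_perm_involution -ps.
by rewrite inE => sK ->; rewrite extend_perm_involution extend_perm_on; split.
Qed.

End InvolutionsOn.

Section SortedPrefix.
Variables (T : Type) (f : T -> nat) (k : nat).
Local Notation below := (fun x => f x < k).

Lemma sorted_ltn_consE x s : sorted ltn (map f (x :: s)) ->
  sorted ltn (map f s) /\ (k <= f x -> count below s = 0).
Proof.
move=> /= xs; split; first exact: path_sorted xs.
have := order_path_min ltn_trans xs; rewrite all_map => gt_x kx.
apply/eqP; rewrite -leqn0 leqNgt -has_count -all_predC; apply: sub_all gt_x => y /=.
by rewrite -leqNgt => /ltnW; apply: leq_trans.
Qed.

Lemma sorted_nth_below s d i : sorted ltn (map f s) -> i < size s ->
  below (nth d s i) = (i < count below s).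
Proof.
elim: s i => [// | x s IH] i /sorted_ltn_consE [ss cs0] /=.
case: (ltnP (f x) k) => [xk | kx]; case: i => [| i] //= i_lt; first by rewrite IH.
  by rewrite cs0 // ltnNge kx.
by rewrite IH // cs0.
Qed.

Lemma sorted_filter_below s : sorted ltn (map f s) ->
  filter below s = take (count below s) s.
Proof.
elim: s => [// | x s IH] /sorted_ltn_consE [ss cs0] /=.
case: (ltnP (f x) k) => [xk | /cs0 c0] /=; first by rewrite IH.
by rewrite c0 take0; apply: size0nil; rewrite size_filter c0.
Qed.

End SortedPrefix.

Lemma sorted_count_index (v : seq nat) x : sorted ltn v -> x \in v ->
  count (fun y => y < x) v = index x v.
Proof.
elim: v => [// | y v IH] yv; have /= ltn_y := order_path_min ltn_trans yv.
rewrite inE /=; have [-> _ | ne /= xv] := eqVneq x y.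
  rewrite ltnn add0n; apply/eqP; rewrite -leqn0 leqNgt -has_count.
  by apply/hasPn => z /(allP ltn_y) /ltnW; rewrite leqNgt.
by rewrite (allP ltn_y x xv) IH // (path_sorted yv).
Qed.

(* [pattern U] relabels each letter by its rank, i.e. by its index in the
   sorted rearrangement [V] of [U]. *)
Lemma word_involution_patternP (U V : seq nat) :
  uniq U -> sorted ltn V -> perm_eq U V ->
  reflect (forall i i', i < size U -> i' < size U ->
             nth 0 U i' = nth 0 V i -> nth 0 V i' = nth 0 U i)
          (word_involution (pattern U)).
Proof.
move=> U_uniq V_sorted UV.
have size_VU : size V = size U by rewrite (perm_size UV).
have memUV x : (x \in U) = (x \in V) by apply: perm_mem.
have V_uniq : uniq V by rewrite -(perm_uniq UV).
have nth_pattern i : i < size U -> nth 0 (pattern U) i = index (nth 0 U i) V.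
  move=> iU; rewrite (nth_map 0) // (seq.permP UV).
  by rewrite sorted_count_index // -memUV mem_nth.
have rank_lt i : i < size U -> index (nth 0 U i) V < size U.
  by move=> iU; rewrite -size_VU index_mem -memUV mem_nth.
rewrite /word_involution size_map; apply: (iffP allP) => [W i i' iU iU' e | H i].
  have /W/eqP : i' \in iota 0 (size U) by rewrite mem_iota.
  rewrite !nth_pattern // ?rank_lt // e index_uniq ?size_VU // => <-.
  by rewrite nth_index // -memUV mem_nth.
rewrite mem_iota add0n => /= iU; rewrite !nth_pattern ?rank_lt //.
have e : nth 0 U i = nth 0 V (index (nth 0 U i) V) by rewrite nth_index // -memUV mem_nth.
by rewrite -(H _ _ (rank_lt _ iU) iU e) index_uniq ?size_VU.
Qed.

Lemma card_setI_eq (T : finType) (L B : {set T}) m : B \subset L -> #|B| <= m ->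
  #|[set Q : {set T} | (L :&: Q == B) && (#|Q| == m)]| = 'C(#|~: L|, m - #|B|).
Proof.
move=> BL Bm.
have setDK (S : {set T}) : S \subset ~: L -> (B :|: S) :\: L = S.
  rewrite -disjoints_subset => /setDidPl SL.
  by move: BL; rewrite setDUl SL -setD_eq0 => /eqP ->; rewrite set0U.
have setIK (S : {set T}) : S \subset ~: L -> L :&: (B :|: S) = B.
  rewrite -disjoints_subset disjoint_sym => /disjoint_setI0 LS.
  by rewrite setIUr (setIidPr BL) LS setU0.
rewrite -cards_draws -[in RHS](card_in_imset (f := fun S => B :|: S)) => [|S1 S2]; last first.
  by rewrite !inE => /andP[S1L _] /andP[S2L _] /(congr1 (fun Q => Q :\: L)) /=; rewrite !setDK.
apply: eq_card => Q; rewrite inE; apply/andP/imsetP => [[/eqP QB /eqP Qm] | [S]].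
  exists (Q :\: L); last by rewrite -QB setIC setID.
  by rewrite inE subsetDr -Qm -(cardsID L Q) setIC QB addKn /=.
rewrite inE => /andP[SL /eqP Sm] ->; rewrite setIK // cardsU Sm.
have /disjoint_setI0 -> : [disjoint B & S].
  by rewrite disjoint_sym disjoints_subset (subset_trans SL) // setCS.
by rewrite cards0 subn0 subnKC ?eqxx.
Qed.

Lemma sorted_enum_ord (m : nat) (A : {pred 'I_m}) : sorted ltn (map val (enum A)).
Proof.
rewrite -[enum _](eq_filter (mem_enum _)) -(eq_filter (mem_map val_inj _)) -filter_map.
by rewrite (sorted_filter ltn_trans) // unlock val_ord_enum iota_ltn_sorted.
Qed.

Section InvolutionsContaining.
Variables (n k j : nat) (tau : 'S_k).
Hypotheses (j_le_k : j <= k) (k_le_n : k <= n).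

Definition tau_word : seq 'I_n := [seq widen_ord k_le_n (tau i) | i <- enum 'I_k].
Definition low : {set 'I_n} := [set i : 'I_n | i < k].
Definition tau_head : {set 'I_n} := [set x in take j tau_word].

Lemma mem_tau_word y : (y \in tau_word) = (y < k).
Proof.
apply/mapP/idP => [[i _ ->] | yk]; first by rewrite /= ltn_ord.
by exists (tau^-1 (Ordinal yk))%g; rewrite ?mem_enum // permKV; apply: val_inj.
Qed.

Lemma tau_word_uniq : uniq tau_word.
Proof.
rewrite map_inj_uniq ?enum_uniq // => x y /(congr1 val) /= /val_inj; apply: perm_inj.
Qed.

Lemma size_tau_word : size tau_word = k.
Proof. by rewrite size_map size_enum_ord. Qed.

Lemma val_tau_word : map val tau_word = perm_word tau.
Proof. by rewrite /perm_word -map_comp. Qed.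

Lemma size_take_tau_word : size (take j tau_word) = j.
Proof. by rewrite size_takel ?size_tau_word. Qed.

Lemma card_low : #|low| = k.
Proof.
rewrite -size_tau_word -(card_uniqP tau_word_uniq).
by apply: eq_card => x; rewrite inE mem_tau_word.
Qed.

Lemma card_tau_head : #|tau_head| = j.
Proof.
by rewrite cardsE (card_uniqP _) ?take_uniq ?tau_word_uniq ?size_take_tau_word.
Qed.

Lemma tau_head_sub : tau_head \subset low.
Proof. by apply/subsetP => x; rewrite !inE -mem_tau_word => /mem_take. Qed.

Lemma nb_intoE (p : 'S_n) : nb_into k p = #|low :&: p @^-1: low|.
Proof. by apply: eq_card => i; rewrite !inE. Qed.

(* The letters of [p] below [k] sit at the positions [p @^-1: low], in increasing order. *)
Lemma contains_subseqE (p : 'S_n) : involutive p ->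
  contains_subseq p tau = (map p tau_word == enum (p @^-1: low)).
Proof.
move=> pK; rewrite /contains_subseq.
have p_uniq : uniq (perm_word p).
  by rewrite map_inj_uniq ?enum_uniq // => x y /val_inj /perm_inj.
have low_letters : [seq x <- perm_word p | x \in perm_word tau] =
                   map val (map p (enum (p @^-1: low))).
  rewrite filter_map -map_comp enumT /enum_mem; congr map; apply: eq_filter => i /=.
  by rewrite -val_tau_word (mem_map val_inj) mem_tau_word !inE.
apply/(subseq_uniqP p_uniq)/eqP; rewrite low_letters -val_tau_word.
  by move=> /(inj_map val_inj) ->; rewrite -map_comp (eq_map pK) map_id.
by move=> <-; rewrite -map_comp (eq_map pK) map_id.
Qed.

Lemma preim_low_eq (p : 'S_n) (Q : {set 'I_n}) : involutive p -> map p tau_word = enum Q ->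
  p @^-1: low = Q.
Proof.
move=> pK pQ; apply/setP => x; rewrite !inE -mem_enum -pQ -mem_tau_word.
by rewrite -{2}[x]pK (mem_map perm_inj).
Qed.

Local Notation counted p :=
  [&& is_involution p, contains_subseq p tau & nb_into k p == j].

Lemma card_counted_fiber (Q : {set 'I_n}) :
  #|[set p : 'S_n | counted p && (p @^-1: low == Q)]| =
  if #|low :&: Q| == j then #|[set p : 'S_n | (p * p == 1)%g && (map p tau_word == enum Q)]|
  else 0.
Proof.
case: ifP => [lowQ | lowQ]; last first.
  apply: eq_card0 => p; rewrite !inE nb_intoE.
  by apply/negP => /andP[/and3P[_ _ /eqP pj] /eqP pQ]; rewrite -pQ pj eqxx in lowQ.
apply: eq_card => p; rewrite !inE /is_involution.
have [/perm_involP pK | //] := boolP (p * p == 1)%g.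
rewrite contains_subseqE // nb_intoE /=.
apply/idP/idP => [/andP[/andP[_ /eqP pQ] /eqP <-] // | /eqP pQ].
by rewrite (preim_low_eq pK pQ) pQ lowQ !eqxx.
Qed.

Lemma card_mapping_tau_word (Q : {set 'I_n}) :
  #|[set p : 'S_n | (p * p == 1)%g && (map p tau_word == enum Q)]| =
  if (#|Q| == k) && compatible tau_word (enum Q) then t (n - #|low :|: Q|) else 0.
Proof.
have [Qk | Qk] /= := eqVneq #|Q| k; last first.
  apply: eq_card0 => p; rewrite inE; apply/negP => /andP[_ /eqP pQ].
  by move: Qk; rewrite cardE -pQ size_map size_tau_word eqxx.
rewrite card_involutions_mapping ?tau_word_uniq ?enum_uniq ?size_tau_word -?cardE //.
case: ifP => // _; rewrite card_involutions_on; congr t.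
have -> : ~: matched tau_word (enum Q) = ~: (low :|: Q).
  by congr setC; apply/setP => x; rewrite !inE mem_tau_word mem_enum.
by rewrite cardsCs setCK card_ord.
Qed.

Definition admissible (Q : {set 'I_n}) : bool :=
  [&& #|low :&: Q| == j, #|Q| == k & compatible tau_word (enum Q)].

Lemma card_counted :
  #|[set p : 'S_n | counted p]| = #|[set Q | admissible Q]| * t (n + j - 2 * k).
Proof.
rewrite -[LHS]sum1dep_card (partition_big (fun p : 'S_n => p @^-1: low) predT) //=.
rewrite -sum_nat_const (big_mkcond (mem [set Q | admissible Q])) /=.
apply: eq_bigr => Q _; rewrite sum1dep_card card_counted_fiber card_mapping_tau_word.
rewrite inE /admissible; have [lowQ | //] /= := eqVneq #|low :&: Q| j.
have [Qk | //] /= := eqVneq #|Q| k; case: ifP => // _; congr t.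
have := cardsU low Q; have := subset_leq_card (subsetIl low Q).
rewrite card_low Qk lowQ; move: #|_ :|: _| => u; lia.
Qed.

Lemma enum_low_setI (Q : {set 'I_n}) : enum (low :&: Q) = [seq x <- enum Q | val x < k].
Proof.
by rewrite /enum_mem -filter_predI; apply: eq_filter => x; rewrite /= !inE andbC.
Qed.

Lemma count_low (Q : {set 'I_n}) : count (fun x : 'I_n => val x < k) (enum Q) = #|low :&: Q|.
Proof. by rewrite cardE enum_low_setI size_filter. Qed.

Lemma take_enum_low (Q : {set 'I_n}) : #|low :&: Q| = j -> take j (enum Q) = enum (low :&: Q).
Proof.
move=> lowQ; rewrite enum_low_setI (sorted_filter_below (f := val)) ?sorted_enum_ord //.
by rewrite count_low lowQ.
Qed.

Section WithDefault.
Variable d : 'I_n.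

Lemma nth_enum_low (Q : {set 'I_n}) i : #|low :&: Q| = j -> i < #|Q| ->
  (nth d (enum Q) i < k) = (i < j).
Proof.
move=> lowQ iQ; rewrite (sorted_nth_below (f := val)) ?sorted_enum_ord ?count_low ?lowQ //.
by rewrite -cardE.
Qed.

Lemma nth_tau_word_head i : i < k -> (nth d tau_word i \in tau_head) = (i < j).
Proof.
move=> ik; rewrite inE in_take ?mem_nth ?size_tau_word //.
by rewrite index_uniq ?size_tau_word ?tau_word_uniq.
Qed.

Lemma nth_tau_word_lt i : i < k -> nth d tau_word i < k.
Proof. by move=> ik; rewrite -mem_tau_word mem_nth ?size_tau_word. Qed.

Lemma compatible_setI_low (Q : {set 'I_n}) : #|Q| = k -> #|low :&: Q| = j ->
  compatible tau_word (enum Q) -> low :&: Q = tau_head.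
Proof.
move=> Qk lowQ.
have size_Q : size (enum Q) = k by rewrite -cardE.
have sizes : size tau_word = size (enum Q) by rewrite size_tau_word size_Q.
move/(compatible_nthP tau_word_uniq (enum_uniq _) sizes d); rewrite size_tau_word => C.
apply/eqP; rewrite eqEcard card_tau_head lowQ leqnn andbT.
apply/subsetP => x; rewrite !inE => /andP[xk xQ].
have i'k : index x tau_word < k by rewrite -size_tau_word index_mem mem_tau_word.
have ik : index x (enum Q) < k by rewrite -size_Q index_mem mem_enum.
have e : nth d tau_word (index x tau_word) = nth d (enum Q) (index x (enum Q)).
  by rewrite !nth_index ?mem_enum ?mem_tau_word.
have : index x tau_word < j.
  by rewrite -(nth_enum_low lowQ) ?Qk // (C _ _ ik i'k e) nth_tau_word_lt.
by rewrite in_take ?mem_tau_word.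
Qed.

Lemma compatible_tau_wordE (Q : {set 'I_n}) : #|Q| = k -> #|low :&: Q| = j ->
  compatible tau_word (enum Q) =
  (low :&: Q == tau_head) && compatible (take j tau_word) (enum tau_head).
Proof.
move=> Qk lowQ.
have size_Q : size (enum Q) = k by rewrite -cardE.
have sizes : size tau_word = size (enum Q) by rewrite size_tau_word size_Q.
have head_sizes : size (take j tau_word) = size (enum tau_head).
  by rewrite size_take_tau_word -cardE card_tau_head.
have nthQ i : i < k -> (nth d (enum Q) i < k) = (i < j).
  by move=> ik; apply: nth_enum_low; rewrite ?Qk.
have head_take : low :&: Q = tau_head -> enum tau_head = take j (enum Q).
  by move=> <-; rewrite take_enum_low.
apply/idP/andP => [compat | [/eqP head_eq]].
  have head_eq := compatible_setI_low Qk lowQ compat.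
  split; first by rewrite head_eq.
  move/(compatible_nthP tau_word_uniq (enum_uniq _) sizes d): compat => C.
  apply/(compatible_nthP (take_uniq j tau_word_uniq) (enum_uniq _) head_sizes d).
  rewrite size_take_tau_word (head_take head_eq) => i i' ij i'j.
  by rewrite !nth_take //; apply: C; rewrite size_tau_word; apply: leq_trans j_le_k.
move/(compatible_nthP (take_uniq j tau_word_uniq) (enum_uniq _) head_sizes d).
rewrite size_take_tau_word (head_take head_eq) => C.
apply/(compatible_nthP tau_word_uniq (enum_uniq _) sizes d).
rewrite size_tau_word => i i' ik i'k e.
have ij : i < j by rewrite -nthQ // -e nth_tau_word_lt.
have i'j : i' < j.
  by rewrite -nth_tau_word_head // e -head_eq !inE nthQ // ij -mem_enum mem_nth ?size_Q.
by have := C i i' ij i'j; rewrite !nth_take //; apply.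
Qed.

Lemma compatible_headE :
  compatible (take j tau_word) (enum tau_head) =
  word_involution (pattern (take j (perm_word tau))).
Proof.
have size_head : size (enum tau_head) = j by rewrite -cardE card_tau_head.
have head_sizes : size (take j tau_word) = size (enum tau_head).
  by rewrite size_take_tau_word size_head.
have word_head : map val (take j tau_word) = take j (perm_word tau).
  by rewrite map_take val_tau_word.
have word_uniq : uniq (take j (perm_word tau)).
  by rewrite -word_head (map_inj_uniq val_inj) take_uniq ?tau_word_uniq.
have word_perm : perm_eq (take j (perm_word tau)) (map val (enum tau_head)).
  rewrite -word_head perm_map // uniq_perm ?take_uniq ?tau_word_uniq ?enum_uniq //.
  by move=> x; rewrite mem_enum inE.
have nthU i : i < j -> nth 0 (map val (take j tau_word)) i = val (nth d (take j tau_word) i).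
  by move=> ij; rewrite (nth_map d) ?size_take_tau_word.
have nthV i : i < j -> nth 0 (map val (enum tau_head)) i = val (nth d (enum tau_head) i).
  by move=> ij; rewrite (nth_map d) ?size_head.
apply/(compatible_nthP (take_uniq j tau_word_uniq) (enum_uniq _) head_sizes d)
      /(word_involution_patternP word_uniq (sorted_enum_ord _) word_perm);
  rewrite -word_head size_map !size_take_tau_word => C i i' ij i'j.
  rewrite !nthU ?nthV // => e.
  by congr val; apply: C => //; apply: val_inj.
move=> e; apply: val_inj.
by rewrite -nthU -?nthV //; apply: C; rewrite ?nthU ?nthV ?e.
Qed.

End WithDefault.

Lemma card_admissible : #|[set Q | admissible Q]| =
  if word_involution (pattern (take j (perm_word tau))) then 'C(n - k, k - j) else 0.
Proof.
have [n0 | n_gt0] := posnP n.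
  have [k0 j0] : k = 0 /\ j = 0 by lia.
  have Q0 (Q : {set 'I_n}) : Q = set0.
    by apply/setP => x; have := ltn_ord x; rewrite {2}n0.
  rewrite j0 take0 k0 bin0; apply: (eq_card1 (x := set0)) => Q.
  rewrite !inE /admissible (Q0 Q) setI0 cards0 j0 k0 !eqxx /=.
  by apply/forallP => x; have := ltn_ord x; rewrite {2}n0.
pose d := Ordinal n_gt0.
have card_traces : #|[set Q | (low :&: Q == tau_head) && (#|Q| == k)]| = 'C(n - k, k - j).
  by rewrite card_setI_eq ?tau_head_sub ?card_tau_head // cardsCs setCK card_low card_ord.
case: ifP => W.
  rewrite -card_traces; apply: eq_card => Q; rewrite !inE /admissible.
  apply/and3P/andP => [[/eqP lowQ /eqP Qk] | [/eqP head_eq /eqP Qk]].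
    by rewrite (compatible_tau_wordE d) // Qk => /andP[-> _].
  have lowQ : #|low :&: Q| = j by rewrite head_eq card_tau_head.
  by rewrite (compatible_tau_wordE d) // lowQ head_eq (compatible_headE d) W Qk !eqxx.
apply: eq_card0 => Q; rewrite inE /admissible; apply/and3P => [[/eqP lowQ /eqP Qk]].
by rewrite (compatible_tau_wordE d) // (compatible_headE d) W andbF.
Qed.

End InvolutionsContaining.

Theorem mainTheorem2 (n k j : nat) (tau : 'S_k) :
  j <= k -> k <= n ->
  #|[set pi : 'S_n | [&& is_involution pi, contains_subseq pi tau
                        & nb_into k pi == j]]|
  = if (j == 0) || word_involution (pattern (take j (perm_word tau)))
    then 'C(n - k, k - j) * t (n + j - 2 * k)
    else 0.
Proof.
move=> j_le_k k_le_n.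
have -> : (j == 0) || word_involution (pattern (take j (perm_word tau))) =
          word_involution (pattern (take j (perm_word tau))).
  by case: eqP => // ->; rewrite take0.
rewrite (card_counted tau j_le_k k_le_n) (card_admissible tau j_le_k k_le_n).
by case: ifP.
Qed.
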